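(* Let $G=(V,E)$ be a directed multigraph with arc costs $c\in\mathbb{R}^E$ and gains $\gamma\in\mathbb{R}^E_{>0}$, $u\in V$, $\mathcal{D}:=\{x\in\mathbb{R}^E_{\ge0}: x(\delta^+(u))=1,\ \nabla x_v=0\ \forall v\ne u\}$, and $f(\delta):=\inf_{x\in\mathcal{D}}\big(c^\top x+\delta\sum_{e\in\delta^-(u)}\gamma_ex_e-\delta\big)$. For any $\delta\in\mathbb{R}$, $f(\delta)=-\infty$ if and only if $\mathcal{D}\ne\emptyset$ and the graph $G\setminus\delta^+(u)$ contains a negative unit-gain cycle, a negative bicycle, or a $(\delta,u)$-negative flow-generating cycle.
   Context: $\delta^\pm(v)$: arcs leaving/entering $v$; $\nabla x_v:=\sum_{e\in\delta^+(v)}x_e-\sum_{e\in\delta^-(v)}\gamma_ex_e$. For a walk $P$ with arcs $e_1,\dots,e_k$: $c(P):=\sum_{i=1}^k(\prod_{j<i}\gamma_{e_j})c_{e_i}$, $\gamma(P):=\prod_i\gamma_{e_i}$. A cycle at $v$ is a $v$-$v$ walk whose intermediate nodes are distinct; it is flow-generating if $\gamma(C)>1$, unit-gain if $\gamma(C)=1$, flow-absorbing if $\gamma(C)<1$; a unit-gain cycle is negative if $c(C)<0$. A bicycle is a walk $CPD$ where $C$ is a flow-generating cycle at $v$, $D$ a flow-absorbing cycle at $w$, and $P$ a $v$-$w$ path; it is negative if $c(P)+\gamma(P)\frac{c(D)}{1-\gamma(D)}<\frac{-c(C)}{\gamma(C)-1}$. A flow-generating cycle $C$ is $(\delta,u)$-negative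 if there is a path $P$ from a node $v\in V(C)$ to $u$ such that $c(C)+(\gamma(C)-1)(c(P)+\gamma(P)\delta)<0$, where $C$ is regarded as a cycle at $v$. *)

From HB Require Import structures.
From mathcomp Require Import all_boot all_order all_algebra.
Set Implicit Arguments. Unset Strict Implicit. Unset Printing Implicit Defensive.
Import Order.TTheory GRing.Theory Num.Theory.
Local Open Scope ring_scope.

Section Gain.
Variables (R : realFieldType) (V E : finType) (src dst : E -> V).
Variables (c gam : E -> R).

Fixpoint walk (v w : V) (P : seq E) : bool :=
  match P with
  | [::] => v == w
  | e :: P' => (src e == v) && walk (dst e) w P'
  end.

(* c(P) = sum_i (prod_{j<i} gam e_j) c e_i *)
Fixpoint wcost (P : seq E) : R :=
  match P with
  | [::] => 0
  | e :: P' => c e + gam e * wcost P'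
  end.

Definition wgain (P : seq E) : R := \prod_(e <- P) gam e.

Definition is_path (v w : V) (P : seq E) : bool :=
  walk v w P && uniq (v :: map dst P).

Definition is_cycle (v : V) (C : seq E) : bool :=
  (C != [::]) && walk v v C && uniq (map src C).

(* arcs of the subgraph G \ delta^+(u) *)
Definition avoids_out (u : V) (P : seq E) : bool := all (fun e => src e != u) P.

Definition has_neg_unit_gain_cycle (u : V) : Prop :=
  exists v C, [/\ is_cycle v C, avoids_out u C, wgain C = 1 & wcost C < 0].

Definition has_neg_bicycle (u : V) : Prop :=
  exists v w C P D,
    [/\ is_cycle v C, is_path v w P, is_cycle w D,
        avoids_out u (C ++ P ++ D) &
        [/\ 1 < wgain C, wgain D < 1 &
        wcost P + wgain P * (wcost D / (1 - wgain D)) < - wcost C / (wgain C - 1)]].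

Definition has_neg_gen_cycle (delta : R) (u : V) : Prop :=
  exists v C P,
    [/\ is_cycle v C, is_path v u P, avoids_out u (C ++ P),
        1 < wgain C &
        wcost C + (wgain C - 1) * (wcost P + wgain P * delta) < 0].

Definition nabla (x : E -> R) (v : V) : R :=
  \sum_(e | src e == v) x e - \sum_(e | dst e == v) gam e * x e.

Definition inD (u : V) (x : E -> R) : Prop :=
  [/\ forall e, 0 <= x e,
      \sum_(e | src e == u) x e = 1 &
      forall v, v != u -> nabla x v = 0].

Definition objective (delta : R) (u : V) (x : E -> R) : R :=
  \sum_e c e * x e + delta * \sum_(e | dst e == u) gam e * x e - delta.

(* f(delta) = -infinity, i.e. the infimum over D is unbounded below
   (the infimum over an empty D is +infinity). *)
Definition f_minus_infty (delta : R) (u : V) : Prop :=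
  forall M : R, exists x, inD u x /\ objective delta u x < M.

End Gain.

(* Sending suitable amounts around the cycles and along the path of a negative structure
   in G \ delta+(u) gives a nonnegative flow y, conserved off u, with no outflow at u and
   negative objective; adding t y to a point of D drives the objective to -oo.
   Conversely, with no negative structure, a flow x conserved off u decomposes by
   repeatedly subtracting the largest multiple of an elementary flow in its support: a
   unit-gain cycle, a generating cycle draining into u, a bicycle, or a walk from u back
   to u or into an absorbing cycle. Each elementary flow y has K * out(y) <= phi(y) for a
   K bounding the costs of walks of length at most |V|, so f(delta) >= K - delta.
   Elementary flows exist in every nonzero support: otherwise a multiplicative node
   potential (the least gain of a support path) makes every support arc tight, which
   contradicts the gain of a support cycle or the flow leaving u. *)

From mathcomp Require Import all_boot all_order all_algebra.
From mathcomp Require Import ring lra.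
From Stdlib Require Import Classical_Prop.
Set Implicit Arguments. Unset Strict Implicit. Unset Printing Implicit Defensive.
Import Order.TTheory GRing.Theory Num.Theory.
Local Open Scope ring_scope.

Section Walks.
Variables (V E : finType) (src dst : E -> V).
Local Notation walk := (walk src dst).
Local Notation is_path := (is_path src dst).
Local Notation is_cycle := (is_cycle src dst).

Lemma walk_srcs v w P : walk v w P -> rcons (map src P) w = v :: map dst P.
Proof.
elim: P v => [|e P IH] v /=; first by move=> /eqP ->.
by case/andP=> /eqP -> /IH ->.
Qed.

Lemma path_walk v w P : is_path v w P -> walk v w P.
Proof. by case/andP. Qed.

Lemma cycle_walk v C : is_cycle v C -> walk v v C.
Proof. by case/andP=> /andP []. Qed.

Lemma cycle_neq_nil v C : is_cycle v C -> C != [::].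
Proof. by case/andP=> /andP []. Qed.

Lemma cycle_base_src v C : is_cycle v C -> v \in map src C.
Proof. by case/andP=> /andP []; case: C => // e C _ /andP [/eqP <- _] _; apply: mem_head. Qed.

Lemma cycle_dst_src v C e : is_cycle v C -> e \in C -> dst e \in map src C.
Proof.
move=> hC he; have : dst e \in v :: map dst C by rewrite inE map_f ?orbT.
rewrite -(walk_srcs (cycle_walk hC)) mem_rcons inE => /orP [/eqP ->|//].
exact: cycle_base_src hC.
Qed.

Lemma path_split a z Q v : is_path a z Q -> v \in a :: map dst Q ->
  exists Q1 Q2, [/\ Q = Q1 ++ Q2, walk a v Q1 & is_path v z Q2].
Proof.
elim: Q a => [|f Q IH] a.
  by move=> hQ; rewrite inE => /eqP ->; exists [::], [::]; rewrite /= eqxx.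
rewrite /is_path /= => /andP [/andP [/eqP hf hw] hu].
rewrite in_cons; case: eqP => [-> _|_ /= hv].
  by exists [::], (f :: Q); rewrite /is_path /= hf eqxx hw.
have hQ : is_path (dst f) z Q by rewrite /is_path hw; case/andP: hu.
have [Q1 [Q2 [-> h1 h2]]] := IH _ hQ hv.
by exists (f :: Q1), Q2; rewrite /= hf eqxx h1.
Qed.

Lemma size_path_lt v z P : is_path v z P -> (size P < #|V|)%N.
Proof.
case/andP=> _ /card_uniqP h.
by have := max_card (mem (v :: map dst P)); rewrite h /= size_map.
Qed.

Lemma size_cycle_le v C : is_cycle v C -> (size C <= #|V|)%N.
Proof.
case/andP=> _ /card_uniqP h.
by have := max_card (mem (map src C)); rewrite h size_map.
Qed.

Definition arc_rel (A : pred E) : rel V :=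
  fun a b => [exists e, [&& A e, src e == a & dst e == b]].

Lemma connect_arc A v e :
  connect (arc_rel A) v (src e) -> A e -> connect (arc_rel A) v (dst e).
Proof.
move=> hv hA; apply: connect_trans hv (connect1 _).
by apply/existsP; exists e; rewrite hA !eqxx.
Qed.

Lemma connect_walk A v a w P : connect (arc_rel A) v a -> walk a w P -> all A P ->
  {in P, forall e, connect (arc_rel A) v (src e)}.
Proof.
elim: P a => [|e P IH] a //= hva /andP [/eqP hsrc hw] /andP [hA hPA] f.
rewrite inE => /orP [/eqP ->|hf]; first by rewrite hsrc.
by apply: (IH (dst e)) hw hPA f hf; apply: connect_arc hA; rewrite hsrc.
Qed.

Lemma connect_pathP A v z :
  connect (arc_rel A) v z -> exists2 P, is_path v z P & all A P.
Proof.
case/connectP=> p hp ->{z}; case: (shortenP hp) => p' hp' hu _.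
suff [P [hw hPA hdst]] :
    exists P, [/\ walk v (last v p') P, all A P & map dst P = p'].
  by exists P; rewrite // /is_path hw hdst.
elim: p' v hp' {hp hu} => [|b p' IH] a /=; first by exists [::]; rewrite /= eqxx.
case/andP=> /existsP [e /and3P [hA /eqP hs /eqP hd]] /IH [P [hw hPA hdst]].
by exists (e :: P); rewrite /= hs hd eqxx hw hA hPA hdst.
Qed.

End Walks.

Section LowerBounds.
Variable R : realDomainType.

Lemma fin_lower_bound (T : finType) (f : T -> R) : exists K, forall i, K <= f i.
Proof.
exists (- \sum_i `|f i|) => i; rewrite (bigD1 i) //=.
have := ler_norm (- f i); rewrite normrN.
have : 0 <= \sum_(j | j != i) `|f j| by apply: sumr_ge0.
lra.
Qed.

Lemma bounded_seq_lower_bound (T : finType) n (f : seq T -> seq T -> R) :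
  exists K, forall P D, (size P <= n)%N -> (size D <= n)%N -> K <= f P D.
Proof.
have [K hK] := fin_lower_bound (fun PD : n.-bseq T * n.-bseq T => f PD.1 PD.2).
by exists K => P D hP hD; apply: (hK (Bseq hP, Bseq hD)).
Qed.

End LowerBounds.

Section Potentials.
Variables (R : realFieldType) (V E : finType) (src dst : E -> V).
Local Notation is_path := (is_path src dst).
Local Notation is_cycle := (is_cycle src dst).

(* The potential of v is the least k-product of an A-path leaving v. *)
Lemma potential_le (A : pred E) (k : E -> R) : (forall e, 0 < k e) ->
  (forall v C, is_cycle v C -> all A C -> 1 <= \prod_(e <- C) k e) ->
  exists2 w : V -> R, forall v, 0 < w v & forall e, A e -> w (src e) <= k e * w (dst e).
Proof.
move=> k_gt0 cycle_ge1.
pose prodk (P : seq E) := \prod_(e <- P) k e.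
pose Apath v (P : #|V|.-bseq E) := [exists z, is_path v z P] && all A P.
have Apath_nil v : Apath v [bseq].
  by rewrite /Apath andbT; apply/existsP; exists v; rewrite /is_path /= eqxx.
pose prodb (P : #|V|.-bseq E) := prodk P.
pose opt v := [arg min_(P < [bseq] | Apath v P) prodb P]%O.
have opt_min v z P : is_path v z P -> all A P -> prodk (opt v) <= prodk P.
  move=> hP hPA; have hs := ltnW (size_path_lt hP).
  rewrite /opt; case: (arg_minP prodb (Apath_nil v)) => Q _ /(_ (Bseq hs)).
  by apply; rewrite /Apath hPA andbT; apply/existsP; exists z.
have opt_Apath v : Apath v (opt v).
  by rewrite /opt; case: (arg_minP prodb (Apath_nil v)).
exists (fun v => prodk (opt v)) => [v|e hAe]; first exact: prodr_gt0.
move: (opt (dst e)) (opt_Apath (dst e)) => P /andP [/existsP [z hP] hPA].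
have [hv|hv] := boolP (src e \in dst e :: map dst P); last first.
  apply: le_trans (opt_min _ z (e :: P) _ _) _; last by rewrite /prodk big_cons.
    by case/andP: hP => hw hu; rewrite /is_path /= eqxx hw /= hv.
  by rewrite /= hAe.
have [P1 [P2 [hP12 hP1 hP2]]] := path_split hP hv.
have hP12A : all A P1 && all A P2 by rewrite -all_cat -hP12.
have closing_cycle : is_cycle (src e) (e :: P1).
  rewrite /is_cycle /= eqxx hP1 /=.
  case/andP: hP => _; rewrite hP12 map_cat -cat_cons cat_uniq => /andP [+ _].
  by rewrite -(walk_srcs hP1) rcons_uniq.
have := cycle_ge1 _ _ closing_cycle; rewrite /= hAe big_cons; case/andP: hP12A => hP1A hP2A.
move/(_ hP1A) => ge1; apply: le_trans (opt_min _ _ _ hP2 hP2A) _.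
by rewrite /prodk hP12 big_cat /= mulrA ler_peMl // ltW ?prodr_gt0.
Qed.

Lemma potential_ge (A : pred E) (k : E -> R) : (forall e, 0 < k e) ->
  (forall v C, is_cycle v C -> all A C -> \prod_(e <- C) k e <= 1) ->
  exists2 th : V -> R, forall v, 0 < th v & forall e, A e -> k e * th (dst e) <= th (src e).
Proof.
move=> k_gt0 cycle_le1.
have kV_gt0 e : 0 < (k e)^-1 by rewrite invr_gt0.
have cycle_ge1 v C : is_cycle v C -> all A C -> 1 <= \prod_(e <- C) (k e)^-1.
  move=> hC hA; rewrite prodfV invf_ge1; first exact: cycle_le1 hC hA.
  by apply: prodr_gt0 => e _.
have [w w_gt0 hw] := potential_le kV_gt0 cycle_ge1.
exists (fun v => (w v)^-1) => [v|e hA]; first by rewrite invr_gt0.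
rewrite -[k e]invrK -invfM lef_pV2 ?posrE ?mulr_gt0 ?invr_gt0 //; exact: hw.
Qed.

End Potentials.

Section GeneralizedFlows.
Variables (R : realFieldType) (V E : finType) (src dst : E -> V) (c gam : E -> R).
Hypothesis gam_gt0 : forall e, 0 < gam e.
Variables (u : V) (delta : R).
Local Notation walk := (walk src dst).
Local Notation is_path := (is_path src dst).
Local Notation is_cycle := (is_cycle src dst).
Local Notation avoids_out := (avoids_out src u).
Local Notation wcost := (wcost c gam).
Local Notation wgain := (wgain gam).
Local Notation nabla := (nabla src dst gam).

Definition outflow (x : E -> R) := \sum_(e | src e == u) x e.
Definition cost (x : E -> R) := \sum_e c e * x e.
Definition phi (x : E -> R) := cost x + delta * (outflow x - nabla x u).

Lemma objectiveE x : objective dst c gam delta u x = phi x - delta.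
Proof. by rewrite /objective /phi /outflow /nabla /cost; ring. Qed.

Definition conservative (x : E -> R) :=
  (forall e, 0 <= x e) /\ (forall v, v != u -> nabla x v = 0).

Definition flow_in (S : pred E) (y : E -> R) :=
  [/\ conservative y, forall e, y e != 0 -> S e & exists e, y e != 0].

Lemma sum_lin (P : pred E) (x y z : E -> R) t : x =1 (fun e => y e + t * z e) ->
  \sum_(e | P e) x e = \sum_(e | P e) y e + t * \sum_(e | P e) z e.
Proof. by move=> hx; rewrite mulr_sumr -big_split; apply: eq_bigr => e _; rewrite hx. Qed.

Lemma wsum_lin (P : pred E) (w x y z : E -> R) t : x =1 (fun e => y e + t * z e) ->
  \sum_(e | P e) w e * x e = \sum_(e | P e) w e * y e + t * \sum_(e | P e) w e * z e.
Proof. by move=> hx; apply: sum_lin => e; rewrite hx mulrDr mulrCA. Qed.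

Section Linearity.
Variables (x y z : E -> R) (t : R).
Hypothesis hx : x =1 (fun e => y e + t * z e).

Lemma nabla_lin v : nabla x v = nabla y v + t * nabla z v.
Proof. by rewrite /nabla (sum_lin _ hx) (wsum_lin _ _ hx); ring. Qed.

Lemma outflow_lin : outflow x = outflow y + t * outflow z.
Proof. exact: sum_lin. Qed.

Lemma cost_lin : cost x = cost y + t * cost z.
Proof. exact: wsum_lin. Qed.

Lemma phi_lin : phi x = phi y + t * phi z.
Proof. by rewrite /phi cost_lin outflow_lin nabla_lin; ring. Qed.

End Linearity.

Fixpoint walk_flow (a : R) (P : seq E) (f : E) : R :=
  if P is e :: P' then (if f == e then a else 0) + walk_flow (a * gam e) P' f else 0.

Lemma sum_if_eq (p : pred E) (g : E -> R) e :
  \sum_(f | p f) (if f == e then g f else 0) = if p e then g e else 0.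
Proof.
rewrite -big_mkcondr; case: ifP => hp.
  by rewrite (big_pred1 e) // => f /=; case: eqP => [->|]; rewrite ?hp ?andbF.
by rewrite big_pred0 // => f; case: eqP => [->|]; rewrite ?hp ?andbF.
Qed.

Lemma walk_flow_cons a e P :
  walk_flow a (e :: P) =1 (fun f => (if f == e then a else 0) + 1 * walk_flow (a * gam e) P f).
Proof. by move=> f; rewrite mul1r. Qed.

Lemma walk_flow_ge0 a P f : 0 <= a -> 0 <= walk_flow a P f.
Proof.
elim: P a => [|e P IH] a ha //=.
by apply: addr_ge0; [case: ifP | apply: IH; rewrite mulr_ge0 // ltW].
Qed.

Lemma walk_flow_eq0 a P f : f \notin P -> walk_flow a P f = 0.
Proof.
elim: P a => [|e P IH] a //=; rewrite inE negb_or => /andP [/negbTE -> hf].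
by rewrite add0r IH.
Qed.

Lemma walk_flow_head_gt0 a e P : 0 < a -> 0 < walk_flow a (e :: P) e.
Proof. by move=> ha /=; rewrite eqxx ltr_wpDr // walk_flow_ge0 // mulr_ge0 ?ltW. Qed.

Lemma walk_flow_supp a P f : walk_flow a P f != 0 -> f \in P.
Proof. by apply: contraR => /walk_flow_eq0 ->. Qed.

Lemma walk_flow_nonzero a P : 0 < a -> P != [::] -> exists e, 0 < walk_flow a P e.
Proof. by case: P => // e P a_gt0 _; exists e; apply: walk_flow_head_gt0. Qed.

Lemma cost_walk_flow a P : cost (walk_flow a P) = a * wcost P.
Proof.
rewrite /cost; elim: P a => [|e P IH] a /=.
  by rewrite big1 ?mulr0 // => f; rewrite mulr0.
rewrite (wsum_lin _ _ (walk_flow_cons _ _ _)).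
under eq_bigr do rewrite (fun_if (fun r => c _ * r)) mulr0.
by rewrite (sum_if_eq xpredT (fun f => c f * a)) IH /=; ring.
Qed.

Lemma nabla_walk_flow a v w P z : walk v w P ->
  nabla (walk_flow a P) z = a * (v == z)%:R - a * wgain P * (w == z)%:R.
Proof.
rewrite /wgain; elim: P a v => [|e P IH] a v /=.
  move=> /eqP ->; rewrite big_nil /nabla !big1 => [|f _|f _] /=; rewrite ?mulr0 //; ring.
case/andP=> /eqP hsrc hw.
rewrite (nabla_lin (walk_flow_cons _ _ _)) (IH _ _ hw) /nabla.
under [X in _ - X + _]eq_bigr do rewrite (fun_if (fun r => gam _ * r)) mulr0.
rewrite (sum_if_eq (fun f => src f == z) (fun=> a)) (sum_if_eq (fun f => dst f == z)).
by rewrite big_cons -hsrc; case: (src e == z); case: (dst e == z) => /=; ring.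
Qed.

Lemma outflow_walk_flow0 a P : avoids_out P -> outflow (walk_flow a P) = 0.
Proof.
rewrite /outflow; elim: P a => [|e P IH] a /=; first by rewrite big1.
case/andP=> /negbTE he hP; rewrite (sum_lin _ (walk_flow_cons _ _ _)).
by rewrite (sum_if_eq (fun f => src f == u) (fun=> a)) IH // he; ring.
Qed.

Lemma outflow_walk_flow_cons a e P : src e = u -> avoids_out P ->
  outflow (walk_flow a (e :: P)) = a.
Proof.
move=> he hP; rewrite (outflow_lin (walk_flow_cons _ _ _)) outflow_walk_flow0 //.
by rewrite /outflow sum_if_eq he eqxx; ring.
Qed.

Lemma unit_cycle_flow v C : is_cycle v C -> avoids_out C -> wgain C = 1 ->
  exists y, [/\ flow_in (fun e => e \in C) y, outflow y = 0 & phi y = wcost C].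
Proof.
move=> hC hCav hg; exists (walk_flow 1 C).
have nabla_y z : nabla (walk_flow 1 C) z = 0.
  by rewrite (nabla_walk_flow _ _ (cycle_walk hC)) hg; ring.
have out_y : outflow (walk_flow 1 C) = 0 by apply: outflow_walk_flow0.
split=> //; last by rewrite /phi cost_walk_flow out_y nabla_y; ring.
split; [split | |].
- by move=> f; apply: walk_flow_ge0.
- by move=> z _; apply: nabla_y.
- by move=> f; apply: walk_flow_supp.
- by have [e he] := walk_flow_nonzero ltr01 (cycle_neq_nil hC); exists e; rewrite gt_eqF.
Qed.

Lemma gen_cycle_flow v C P : is_cycle v C -> is_path v u P -> avoids_out (C ++ P) ->
  1 < wgain C ->
  exists y, [/\ flow_in (fun e => e \in C ++ P) y, outflow y = 0 &
    phi y = (wgain C - 1)^-1 * (wcost C + (wgain C - 1) * (wcost P + wgain P * delta))].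
Proof.
move=> hC hP; rewrite /avoids_out all_cat => /andP [hCav hPav] hgC.
have hgC1 : wgain C - 1 != 0 by rewrite subr_eq0 gt_eqF.
set a := (wgain C - 1)^-1; have a_gt0 : 0 < a by rewrite invr_gt0 subr_gt0.
pose y f := walk_flow a C f + 1 * walk_flow 1 P f.
have hy : y =1 (fun f => walk_flow a C f + 1 * walk_flow 1 P f) by [].
(* [a] units sent around [C] come back as [a + 1]; the surplus drains along [P] into [u]. *)
have nabla_y z : nabla y z = - wgain P * (u == z)%:R.
  rewrite (nabla_lin hy) (nabla_walk_flow _ _ (cycle_walk hC)).
  rewrite (nabla_walk_flow _ _ (path_walk hP)).
  by rewrite /a; field.
have out_y : outflow y = 0 by rewrite (outflow_lin hy) !outflow_walk_flow0 //; ring.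
exists y; split=> //; last first.
  by rewrite /phi out_y nabla_y eqxx mulr1n (cost_lin hy) !cost_walk_flow /a; field.
split; [split | |].
- by move=> f; apply: addr_ge0; rewrite ?mul1r walk_flow_ge0 ?ltW.
- by move=> z hz; rewrite nabla_y eq_sym (negbTE hz) mulr0.
- move=> f; rewrite mem_cat; apply: contraR; rewrite negb_or => /andP [hfC hfP].
  by rewrite /y !walk_flow_eq0 // mulr0 addr0.
- have [e he] := walk_flow_nonzero a_gt0 (cycle_neq_nil hC); exists e.
  by rewrite gt_eqF // (lt_le_trans he) // lerDl mulr_ge0 // walk_flow_ge0.
Qed.

Lemma bicycle_flow v w C P D : is_cycle v C -> is_path v w P -> is_cycle w D ->
  avoids_out (C ++ P ++ D) -> 1 < wgain C -> wgain D < 1 ->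
  exists y, [/\ flow_in (fun e => e \in C ++ P ++ D) y, outflow y = 0 &
    phi y = wcost C / (wgain C - 1) + wcost P + wgain P * (wcost D / (1 - wgain D))].
Proof.
move=> hC hP hD; rewrite /avoids_out !all_cat => /and3P [hCav hPav hDav] hgC hgD.
have hgC1 : wgain C - 1 != 0 by rewrite subr_eq0 gt_eqF.
have hgD1 : 1 - wgain D != 0 by rewrite subr_eq0 gt_eqF.
set a := (wgain C - 1)^-1; have a_gt0 : 0 < a by rewrite invr_gt0 subr_gt0.
set b := wgain P / (1 - wgain D).
have b_gt0 : 0 < b by rewrite divr_gt0 ?subr_gt0 // prodr_gt0.
pose y1 f := walk_flow a C f + 1 * walk_flow 1 P f.
pose y f := y1 f + 1 * walk_flow b D f.
have hy1 : y1 =1 (fun f => walk_flow a C f + 1 * walk_flow 1 P f) by [].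
have hy : y =1 (fun f => y1 f + 1 * walk_flow b D f) by [].
(* The surplus [1] of [C] feeds [P], whose output [wgain P] is absorbed by [b] units
   around [D]. *)
have nabla_y z : nabla y z = 0.
  rewrite (nabla_lin hy) (nabla_lin hy1) (nabla_walk_flow _ _ (cycle_walk hC)).
  rewrite (nabla_walk_flow _ _ (path_walk hP)) (nabla_walk_flow _ _ (cycle_walk hD)).
  by rewrite /a /b; field; rewrite hgC1 hgD1.
have out_y : outflow y = 0.
  by rewrite (outflow_lin hy) (outflow_lin hy1) !outflow_walk_flow0 //; ring.
exists y; split=> //; last first.
  rewrite /phi out_y nabla_y (cost_lin hy) (cost_lin hy1) !cost_walk_flow /a /b.
  by field; rewrite hgC1 hgD1.
split; [split | |].
- by move=> f; rewrite /y /y1 !mul1r !addr_ge0 // walk_flow_ge0 // ltW.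
- by move=> z _; apply: nabla_y.
- move=> f; rewrite !mem_cat; apply: contraR; rewrite !negb_or => /and3P [hfC hfP hfD].
  by rewrite /y /y1 !walk_flow_eq0 // !mulr0 !addr0.
- have [e he] := walk_flow_nonzero a_gt0 (cycle_neq_nil hC); exists e.
  rewrite gt_eqF // /y /y1 !mul1r -addrA (lt_le_trans he) // lerDl.
  by rewrite addr_ge0 // walk_flow_ge0 // ltW.
Qed.

Lemma u_cycle_flow e0 Q : src e0 = u -> is_path (dst e0) u Q -> avoids_out Q ->
  exists y, [/\ flow_in (fun e => e \in e0 :: Q) y, outflow y = 1 &
    phi y = wcost (e0 :: Q) + delta * wgain (e0 :: Q)].
Proof.
move=> he0 hQ hQav; pose y := walk_flow 1 (e0 :: Q).
have hw : walk u u (e0 :: Q) by rewrite /= he0 eqxx path_walk.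
have nabla_y z : nabla y z = (u == z)%:R * (1 - wgain (e0 :: Q)).
  by rewrite (nabla_walk_flow _ _ hw); ring.
have out_y : outflow y = 1 by apply: outflow_walk_flow_cons.
exists y; split=> //; last by rewrite /phi out_y nabla_y eqxx mulr1n cost_walk_flow; ring.
split; [split | |].
- by move=> f; apply: walk_flow_ge0.
- by move=> z hz; rewrite nabla_y eq_sym (negbTE hz) mul0r.
- by move=> f; apply: walk_flow_supp.
- by exists e0; rewrite gt_eqF // walk_flow_head_gt0.
Qed.

Lemma u_absorbing_flow e0 Q w D : src e0 = u -> is_path (dst e0) w Q -> avoids_out Q ->
  is_cycle w D -> avoids_out D -> wgain D < 1 ->
  exists y, [/\ flow_in (fun e => e \in e0 :: Q ++ D) y, outflow y = 1 &
    phi y = wcost (e0 :: Q) + wgain (e0 :: Q) * (wcost D / (1 - wgain D))].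
Proof.
move=> he0 hQ hQav hD hDav hgD; set P := e0 :: Q.
have hgD1 : 1 - wgain D != 0 by rewrite subr_eq0 gt_eqF.
set b := wgain P / (1 - wgain D).
have b_gt0 : 0 < b by rewrite divr_gt0 ?subr_gt0 // prodr_gt0.
have hw : walk u w P by rewrite /= he0 eqxx path_walk.
pose y f := walk_flow 1 P f + 1 * walk_flow b D f.
have hy : y =1 (fun f => walk_flow 1 P f + 1 * walk_flow b D f) by [].
have nabla_y z : nabla y z = (u == z)%:R.
  rewrite (nabla_lin hy) (nabla_walk_flow _ _ hw) (nabla_walk_flow _ _ (cycle_walk hD)).
  by rewrite /b; field.
have out_y : outflow y = 1.
  by rewrite (outflow_lin hy) outflow_walk_flow_cons // outflow_walk_flow0 //; ring.
exists y; split=> //; last first.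
  by rewrite /phi out_y nabla_y eqxx mulr1n (cost_lin hy) !cost_walk_flow /b; field.
split; [split | |].
- by move=> f; rewrite /y mul1r addr_ge0 // walk_flow_ge0 // ltW.
- by move=> z hz; rewrite nabla_y eq_sym (negbTE hz).
- move=> f; rewrite -cat_cons mem_cat; apply: contraR; rewrite negb_or => /andP [hfP hfD].
  by rewrite /y !walk_flow_eq0 // mulr0 addr0.
- have he0_pos : 0 < walk_flow 1 P e0 by apply: walk_flow_head_gt0.
  exists e0; rewrite gt_eqF // /y mul1r (lt_le_trans he0_pos) //.
  by rewrite lerDl walk_flow_ge0 // ltW.
Qed.


Lemma negative_ray :
  has_neg_unit_gain_cycle src dst c gam u \/ has_neg_bicycle src dst c gam u \/
  has_neg_gen_cycle src dst c gam delta u ->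
  exists y, [/\ conservative y, outflow y = 0 & phi y < 0].
Proof.
case=> [[v [C [hC hav hg hneg]]] | [[v [w [C [P [D [hC hP hD hav [hgC hgD hneg]]]]]]] |
        [v [C [P [hC hP hav hgC hneg]]]]]].
- have [y [[y_cons _ _] out_y phi_y]] := unit_cycle_flow hC hav hg.
  by exists y; rewrite phi_y.
- have [y [[y_cons _ _] out_y phi_y]] := bicycle_flow hC hP hD hav hgC hgD.
  by exists y; split=> //; rewrite phi_y; move: hneg; rewrite mulNr; lra.
- have [y [[y_cons _ _] out_y phi_y]] := gen_cycle_flow hC hP hav hgC.
  by exists y; split=> //; rewrite phi_y pmulr_rlt0 // invr_gt0 subr_gt0.
Qed.

Lemma unbounded_of_ray x0 y : inD src dst gam u x0 -> conservative y ->
  outflow y = 0 -> phi y < 0 -> f_minus_infty src dst c gam delta u.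
Proof.
move=> [x0_ge0 x0_out x0_cons] [y_ge0 y_cons] out_y phi_y M.
pose o := phi x0 - delta - M.
pose t := (`|o| + 1) / - phi y.
have t_ge0 : 0 <= t by rewrite divr_ge0 ?addr_ge0 // oppr_ge0 ltW.
have t_phi : t * phi y = - (`|o| + 1) by rewrite /t; field; rewrite lt_eqF.
pose x e := x0 e + t * y e.
have hx : x =1 (fun e => x0 e + t * y e) by [].
exists x; split; first split.
- by move=> e; apply: addr_ge0 => //; apply: mulr_ge0.
- by rewrite -/(outflow x) (outflow_lin hx) out_y mulr0 addr0.
- by move=> v hv; rewrite (nabla_lin hx) x0_cons // y_cons // mulr0 addr0.
- by rewrite objectiveE (phi_lin hx) t_phi; have := ler_norm o; rewrite /o; lra.
Qed.

Definition slack (S : pred V) (th : V -> R) (e : E) :=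
  (S (src e))%:R * th (src e) - (S (dst e))%:R * gam e * th (dst e).

Lemma sum_fibers (p : E -> V) (g : V -> R) (h : E -> R) :
  \sum_z g z * \sum_(e | p e == z) h e = \sum_e g (p e) * h e.
Proof.
rewrite [RHS](partition_big p xpredT) //=; apply: eq_bigr => z _.
by rewrite mulr_sumr; apply: eq_bigr => e /eqP ->.
Qed.

Lemma sum_slack (S : pred V) (th : V -> R) x : (forall z, S z -> nabla x z = 0) ->
  \sum_e x e * slack S th e = 0.
Proof.
move=> x_cons; transitivity (\sum_z (S z)%:R * th z * nabla x z); last first.
  apply: big1 => z _.
  by have [/x_cons ->|_] := boolP (S z); rewrite ?mulr0 ?mulr0n ?mul0r.
rewrite /nabla; under [RHS]eq_bigr do rewrite mulrBr.
rewrite sumrB (sum_fibers src (fun z => (S z)%:R * th z)).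
rewrite (sum_fibers dst (fun z => (S z)%:R * th z)) -sumrB.
by apply: eq_bigr => e _; rewrite /slack; ring.
Qed.

Lemma slack_ge0_eq0 (S : pred V) (th : V -> R) x :
  (forall e, 0 <= x e) -> (forall z, S z -> nabla x z = 0) ->
  (forall e, x e != 0 -> 0 <= slack S th e) -> forall e, x e != 0 -> slack S th e = 0.
Proof.
move=> x_ge0 x_cons slack_ge0.
have term_ge0 e : 0 <= x e * slack S th e.
  by have [->|/slack_ge0] := eqVneq (x e) 0; [rewrite mul0r | apply: mulr_ge0].
move=> e he.
have := psumr_eq0P (P := xpredT) (fun e _ => term_ge0 e) (sum_slack th x_cons) (i := e) isT.
by move/eqP; rewrite mulf_eq0 (negbTE he) => /eqP.
Qed.

Lemma slack_le0_eq0 (S : pred V) (th : V -> R) x :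
  (forall e, 0 <= x e) -> (forall z, S z -> nabla x z = 0) ->
  (forall e, x e != 0 -> slack S th e <= 0) -> forall e, x e != 0 -> slack S th e = 0.
Proof.
move=> x_ge0 x_cons slack_le0 e he.
have slackN f : slack S (fun z => - th z) f = - slack S th f by rewrite /slack; ring.
apply/eqP; rewrite -oppr_eq0 -slackN; apply/eqP; apply: slack_ge0_eq0 he => // f hf.
by rewrite slackN oppr_ge0 slack_le0.
Qed.

Lemma tight_walk (th : V -> R) v w P : walk v w P ->
  {in P, forall e, th (src e) = gam e * th (dst e)} -> th v = wgain P * th w.
Proof.
rewrite /wgain; elim: P v => [|e P IH] v /=; first by move=> /eqP ->; rewrite big_nil mul1r.
case/andP=> /eqP <- hw tight; rewrite big_cons -mulrA -(IH _ hw); last first.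
  by move=> f hf; apply: tight; rewrite inE hf orbT.
by apply: tight; apply: mem_head.
Qed.

Lemma tight_cycle_gain (th : V -> R) v C : (forall z, 0 < th z) -> is_cycle v C ->
  {in C, forall e, th (src e) = gam e * th (dst e)} -> wgain C = 1.
Proof.
move=> th_gt0 hC /(tight_walk (cycle_walk hC)) hv.
by apply: (mulIf (negbT (gt_eqF (th_gt0 v)))); rewrite mul1r -hv.
Qed.

(* Weighted by the potential, conservation on [F] is a sum of nonpositive slacks, so
   every slack vanishes. *)
Lemma closed_region_tight x (F : pred V) : (forall e, 0 <= x e) ->
  (forall z, F z -> nabla x z = 0) -> (forall e, x e != 0 -> F (src e) -> F (dst e)) ->
  (forall v C, is_cycle v C -> all (fun e => (x e != 0) && F (src e)) C -> 1 <= wgain C) ->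
  exists2 th : V -> R, forall z, 0 < th z & forall e, x e != 0 ->
    (F (src e) -> th (src e) = gam e * th (dst e)) /\ (F (dst e) -> F (src e)).
Proof.
move=> x_ge0 x_cons F_closed cycle_ge1.
have [th th_gt0 hth] := potential_le gam_gt0 cycle_ge1.
exists th => // e he.
have slack_le0 f : x f != 0 -> slack F th f <= 0.
  move=> hf; rewrite /slack; have [hFs|hFs] := boolP (F (src f)).
    by rewrite F_closed // !mul1r subr_le0; apply: hth; rewrite hf.
  by rewrite mul0r sub0r oppr_le0 !mulr_ge0 ?ler0n // ltW.
move: (slack_le0_eq0 x_ge0 x_cons slack_le0 he); rewrite /slack => /eqP slack0.
split=> [hFs|hFd].
  by move: slack0; rewrite hFs F_closed // !mul1r subr_eq0 => /eqP.
apply: contraTT slack0 => hFs; rewrite (negbTE hFs) hFd mul0r sub0r mul1r oppr_eq0.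
by rewrite mulf_neq0 // lt0r_neq0.
Qed.

Definition supp_out (x : E -> R) (e : E) := (x e != 0) && (src e != u).

Lemma absorbing_support_leaves_u x : conservative x -> (exists e, x e != 0) ->
  (forall v C, is_cycle v C -> all (supp_out x) C -> wgain C < 1) ->
  exists2 e, x e != 0 & src e = u.
Proof.
move=> [x_ge0 x_cons] [e0 he0] absorbing; apply: NNPP => no_out.
have supp_outE e : x e != 0 -> supp_out x e.
  by move=> he; rewrite /supp_out he; apply/eqP => hs; apply: no_out; exists e.
have tight th lam : 1 <= lam ->
    (forall e, supp_out x e -> lam * gam e * th (dst e) <= th (src e)) ->
    (forall z, 0 < th z) ->
    forall e, x e != 0 -> th (src e) = (dst e != u)%:R * gam e * th (dst e).
  move=> lam_ge1 hth th_gt0.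
  have slack_ge0 f : x f != 0 -> 0 <= slack (fun z => z != u) th f.
    move=> hf; have hf' := supp_outE f hf.
    rewrite /slack (andP hf').2 mul1r subr_ge0 (le_trans _ (hth f hf')) // -!mulrA.
    apply: ler_wpM2r; first by rewrite mulr_ge0 // ltW.
    by case: (dst f != u); [exact: lam_ge1 | exact: le_trans ler01 lam_ge1].
  move=> e he; have := slack_ge0_eq0 x_ge0 x_cons slack_ge0 he.
  by rewrite /slack (andP (supp_outE e he)).2 mul1r => /eqP; rewrite subr_eq0 => /eqP.
have [[v [C [hC hCA]]] | acyclic] := classic (exists v C, is_cycle v C /\ all (supp_out x) C).
  have [th th_gt0 hth] := potential_ge gam_gt0 (fun v C hC hCA => ltW (absorbing v C hC hCA)).
  have hth1 e : supp_out x e -> 1 * gam e * th (dst e) <= th (src e).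
    by rewrite mul1r; apply: hth.
  have ht := tight th 1 (lexx 1) hth1 th_gt0.
  have := absorbing _ _ hC hCA; rewrite (tight_cycle_gain th_gt0 hC) ?ltxx // => e he.
  have /mapP [f hf hdst] := cycle_dst_src hC he.
  have /andP [hxe _] := allP hCA e he; have /andP [_ hsf] := allP hCA f hf.
  by rewrite ht // hdst hsf mul1r.
(* Without support cycles even doubled gains admit a potential, which cannot be tight
   at [e0]. *)
have two_gam_gt0 e : 0 < 2 * gam e by rewrite mulr_gt0.
have no_cycle v C : is_cycle v C -> all (supp_out x) C -> \prod_(e <- C) (2 * gam e) <= 1.
  by move=> hC hCA; case: acyclic; exists v, C.
have [th th_gt0 hth] := potential_ge two_gam_gt0 no_cycle.
have two_ge1 : 1 <= 2 :> R by rewrite ler1n.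
have h1 := tight th 2 two_ge1 hth th_gt0 e0 he0; have h2 := hth e0 (supp_outE e0 he0).
have hp : 0 < gam e0 * th (dst e0) by rewrite mulr_gt0.
by move: h1 h2 hp; case: (dst e0 != u) => /= -> h2 hp; rewrite -mulrA in h2; nra.
Qed.

Section ConformalDecomposition.
Variable g : (E -> R) -> R.
Hypothesis g_lin : forall x y z t, x =1 (fun e => y e + t * z e) -> g x = g y + t * g z.
Hypothesis g_subflow : forall x, conservative x -> (exists e, x e != 0) ->
  exists2 y, flow_in (fun e => x e != 0) y & 0 <= g y.

(* Subtract from [x] the largest multiple of [y] keeping it nonnegative: the support
   shrinks. *)
Lemma conservative_ge0 x : conservative x -> 0 <= g x.
Proof.
have [n lt_n] := ubnP #|[pred e | x e != 0]|; elim: n x lt_n => // n IH x lt_n.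
move=> [x_ge0 x_cons]; have [[e1 he1] | x_eq0] := classic (exists e, x e != 0); last first.
  have hx : x =1 (fun e => x e + 1 * x e).
    move=> e; have [->|he] := eqVneq (x e) 0; first by rewrite mulr0 addr0.
    by case: x_eq0; exists e.
  by have := g_lin hx; rewrite mul1r; lra.
have [y [[y_ge0 y_cons] y_supp [e2 he2]] gy_ge0] :=
  g_subflow (conj x_ge0 x_cons) (ex_intro _ e1 he1).
pose ratio e := x e / y e.
have [es hes ratio_min] : exists2 es, y es != 0 & forall e, y e != 0 -> ratio es <= ratio e.
  by case: (arg_minP (P := fun e => y e != 0) ratio he2) => es; exists es.
have y_gt0 e : y e != 0 -> 0 < y e by move=> he; rewrite lt_def he y_ge0.
have t_gt0 : 0 < ratio es by rewrite divr_gt0 ?y_gt0 // lt_def y_supp ?x_ge0.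
pose x' e := x e - ratio es * y e.
have hx : x =1 (fun e => x' e + ratio es * y e) by move=> e; rewrite /x' subrK.
have x'_cons : conservative x'.
  split=> [e|v hv].
    rewrite /x' subr_ge0; have [->|he] := eqVneq (y e) 0; first by rewrite mulr0.
    by rewrite -ler_pdivlMr ?y_gt0 // ratio_min.
  by move: (nabla_lin hx v); rewrite x_cons // y_cons // mulr0 addr0 => <-.
have supp_lt : (#|[pred e | x' e != 0%R]| < #|[pred e | x e != 0%R]|)%N.
  apply: proper_card; apply/properP; split.
    apply/subsetP => e; rewrite !inE; apply: contra => /eqP hxe.
    have hye : y e = 0 by case: (eqVneq (y e) 0) => [//|/y_supp]; rewrite hxe eqxx.
    by rewrite /x' hxe hye mulr0 subr0.
  by exists es; rewrite !inE ?y_supp // /x' /ratio divfK // subrr eqxx.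
rewrite (g_lin hx); apply: addr_ge0; last exact: mulr_ge0 (ltW t_gt0) gy_ge0.
exact: IH (leq_trans supp_lt (ltnSE lt_n)) x'_cons.
Qed.

End ConformalDecomposition.

Section BoundedSubflows.
Variable K : R.
Hypothesis K_path : forall P, (size P <= #|V|)%N -> K <= wcost P + delta * wgain P.
Hypothesis K_path_cycle : forall P D, (size P <= #|V|)%N -> (size D <= #|V|)%N ->
  K <= wcost P + wgain P * (wcost D / (1 - wgain D)).
Hypothesis no_unit : ~ has_neg_unit_gain_cycle src dst c gam u.
Hypothesis no_bicycle : ~ has_neg_bicycle src dst c gam u.
Hypothesis no_gen : ~ has_neg_gen_cycle src dst c gam delta u.
Variable x : E -> R.
Hypothesis x_cons : conservative x.
Local Notation A := (supp_out x).
Local Notation reach := (connect (arc_rel src dst A)).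
Local Notation bounded_subflow :=
  (exists2 y, flow_in (fun e => x e != 0) y & K * outflow y <= phi y).

Lemma flow_in_supp (L : seq E) y : {in L, forall e, x e != 0} ->
  flow_in (fun e => e \in L) y -> flow_in (fun e => x e != 0) y.
Proof. by move=> hL [y_cons y_supp y_nz]; split=> // e /y_supp /hL. Qed.

Lemma supp_out_supp (L : seq E) : all A L -> {in L, forall e, x e != 0}.
Proof. by move=> /allP hL e /hL /andP []. Qed.

Lemma supp_out_avoids (L : seq E) : all A L -> avoids_out L.
Proof. by apply: sub_all => e /andP []. Qed.

Lemma reach_supp_out a e : ~~ reach a u -> x e != 0 -> reach a (src e) -> A e.
Proof. by move=> hu he hs; rewrite /supp_out he; apply: contraNneq hu => <-. Qed.

Lemma reach_tight a : ~~ reach a u ->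
  ~ (exists w D, [/\ is_cycle w D, all A D, wgain D < 1 & reach a w]) ->
  exists2 th : V -> R, forall z, 0 < th z & forall e, x e != 0 ->
    (reach a (src e) -> th (src e) = gam e * th (dst e)) /\
    (reach a (dst e) -> reach a (src e)).
Proof.
move=> hu no_absorbing; case: x_cons => x_ge0 x_cons'.
apply: closed_region_tight => // [z hz|e he hs|v C hC hCF].
- by apply: x_cons'; apply: contraNneq hu => <-.
- exact: connect_arc hs (reach_supp_out hu he hs).
rewrite leNgt; apply/negP => hgC; apply: no_absorbing; exists v, C; split=> //.
  by apply/allP => e /(allP hCF) /andP [he hs]; apply: reach_supp_out hu he hs.
by have /mapP [e /(allP hCF) /andP [_ hs] ->] := cycle_base_src hC.
Qed.

Lemma bounded_subflow_unit v C : is_cycle v C -> all A C -> wgain C = 1 -> bounded_subflow.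
Proof.
move=> hC hCA hg.
have [y [hy out_y phi_y]] := unit_cycle_flow hC (supp_out_avoids hCA) hg.
exists y; first exact: flow_in_supp (supp_out_supp hCA) hy.
rewrite out_y phi_y mulr0 leNgt; apply/negP => hneg; apply: no_unit.
by exists v, C; split=> //; apply: supp_out_avoids.
Qed.

Lemma bounded_subflow_gen v C : is_cycle v C -> all A C -> 1 < wgain C -> bounded_subflow.
Proof.
move=> hC hCA hgC.
have [/connect_pathP [P hP hPA] | hu] := boolP (reach v u).
  have hCPA : all A (C ++ P) by rewrite all_cat hCA.
  have [y [hy out_y phi_y]] := gen_cycle_flow hC hP (supp_out_avoids hCPA) hgC.
  exists y; first exact: flow_in_supp (supp_out_supp hCPA) hy.
  rewrite out_y phi_y mulr0; apply: mulr_ge0; first by rewrite invr_ge0 subr_ge0 ltW.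
  rewrite leNgt; apply/negP => hneg; apply: no_gen.
  by exists v, C, P; split=> //; apply: supp_out_avoids.
have [[w [D [hD hDA hgD /connect_pathP [P hP hPA]]]] | no_absorbing] :=
  classic (exists w D, [/\ is_cycle w D, all A D, wgain D < 1 & reach v w]).
  have hCPDA : all A (C ++ P ++ D) by rewrite !all_cat hCA hPA.
  have [y [hy out_y phi_y]] := bicycle_flow hC hP hD (supp_out_avoids hCPDA) hgC hgD.
  exists y; first exact: flow_in_supp (supp_out_supp hCPDA) hy.
  rewrite out_y phi_y mulr0.
  have : ~ (wcost P + wgain P * (wcost D / (1 - wgain D)) < - wcost C / (wgain C - 1)).
    move=> hneg; apply: no_bicycle.
    by exists v, w, C, P, D; split=> //; apply: supp_out_avoids.
  by move/negP; rewrite -leNgt mulNr; lra.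
have [th th_gt0 tight] := reach_tight hu no_absorbing.
suff : wgain C = 1 by move=> hg1; move: hgC; rewrite hg1 ltxx.
apply: (tight_cycle_gain th_gt0 hC) => e he.
apply: (tight e (supp_out_supp hCA he)).1.
exact: connect_walk (connect0 _ v) (cycle_walk hC) hCA e he.
Qed.

Lemma bounded_subflow_from_u e0 : x e0 != 0 -> src e0 = u -> bounded_subflow.
Proof.
move=> he0 hsrc.
have supp_cons L : all A L -> {in e0 :: L, forall e, x e != 0}.
  by move=> hL e; rewrite inE => /orP [/eqP -> // | /(supp_out_supp hL)].
have [/connect_pathP [Q hQ hQA] | hu] := boolP (reach (dst e0) u).
  have [y [hy out_y phi_y]] := u_cycle_flow hsrc hQ (supp_out_avoids hQA).
  exists y; first exact: flow_in_supp (supp_cons _ hQA) hy.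
  by rewrite out_y phi_y mulr1; apply: K_path; exact: size_path_lt hQ.
have [[w [D [hD hDA hgD /connect_pathP [Q hQ hQA]]]] | no_absorbing] :=
  classic (exists w D, [/\ is_cycle w D, all A D, wgain D < 1 & reach (dst e0) w]).
  have [y [hy out_y phi_y]] :=
    u_absorbing_flow hsrc hQ (supp_out_avoids hQA) hD (supp_out_avoids hDA) hgD.
  have hQDA : all A (Q ++ D) by rewrite all_cat hQA.
  exists y; first exact: flow_in_supp (supp_cons _ hQDA) hy.
  rewrite out_y phi_y mulr1.
  by apply: K_path_cycle; [exact: size_path_lt hQ | exact: size_cycle_le hD].
have [th _ tight] := reach_tight hu no_absorbing.
by have := (tight e0 he0).2 (connect0 _ _); rewrite hsrc (negbTE hu).
Qed.

Lemma bounded_subflow_exists : (exists e, x e != 0) -> bounded_subflow.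
Proof.
move=> x_nz.
have [[v [C [hC hCA hg]]] | no_ge1] :=
  classic (exists v C, [/\ is_cycle v C, all A C & 1 <= wgain C]).
  have [hg1|hne] := eqVneq (wgain C) 1; first exact: bounded_subflow_unit hC hCA hg1.
  by apply: bounded_subflow_gen hC hCA _; rewrite lt_neqAle eq_sym hne.
have absorbing v C : is_cycle v C -> all A C -> wgain C < 1.
  by move=> hC hCA; rewrite ltNge; apply/negP => hg; apply: no_ge1; exists v, C.
have [e0 he0 hsrc] := absorbing_support_leaves_u x_cons x_nz absorbing.
exact: bounded_subflow_from_u he0 hsrc.
Qed.

End BoundedSubflows.

Lemma walk_cost_bounds : exists K,
  (forall P, (size P <= #|V|)%N -> K <= wcost P + delta * wgain P) /\
  (forall P D, (size P <= #|V|)%N -> (size D <= #|V|)%N ->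
     K <= wcost P + wgain P * (wcost D / (1 - wgain D))).
Proof.
have [K1 hK1] := bounded_seq_lower_bound #|V| (fun P (_ : seq E) => wcost P + delta * wgain P).
have [K2 hK2] := bounded_seq_lower_bound #|V|
  (fun P D => wcost P + wgain P * (wcost D / (1 - wgain D))).
exists (Num.min K1 K2); split=> [P hP|P D hP hD]; rewrite ge_min.
  by rewrite (hK1 P [::]).
by rewrite (hK2 P D) ?orbT.
Qed.

Lemma phi_lower_bound : ~ has_neg_unit_gain_cycle src dst c gam u ->
  ~ has_neg_bicycle src dst c gam u -> ~ has_neg_gen_cycle src dst c gam delta u ->
  exists K, forall x, conservative x -> K * outflow x <= phi x.
Proof.
move=> no_unit no_bicycle no_gen; have [K [K_path K_path_cycle]] := walk_cost_bounds.
exists K => x x_cons; rewrite -subr_ge0.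
apply: (conservative_ge0 (g := fun x => phi x - K * outflow x)) x_cons.
  by move=> x1 y z t hx; rewrite (phi_lin hx) (outflow_lin hx); ring.
move=> x1 x1_cons x1_nz.
have [y hy hK] :=
  bounded_subflow_exists K_path K_path_cycle no_unit no_bicycle no_gen x1_cons x1_nz.
by exists y; rewrite // subr_ge0.
Qed.

End GeneralizedFlows.

Theorem lemma4p6 (R : realFieldType) (V E : finType) (src dst : E -> V)
    (c gam : E -> R) (hgam : forall e, 0 < gam e) (u : V) (delta : R) :
  f_minus_infty src dst c gam delta u <->
  ((exists x, inD src dst gam u x) /\
   (has_neg_unit_gain_cycle src dst c gam u \/
    has_neg_bicycle src dst c gam u \/
    has_neg_gen_cycle src dst c gam delta u)).
Proof.
split=> [unbounded | [[x0 x0_in] negative]]; last first.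
  have [y [y_cons out_y phi_y]] := negative_ray hgam negative.
  exact: unbounded_of_ray x0_in y_cons out_y phi_y.
have [x0 [x0_in _]] := unbounded 0; split; first by exists x0.
apply: NNPP => no_negative.
have [K K_bound] := phi_lower_bound hgam (fun h => no_negative (or_introl h))
  (fun h => no_negative (or_intror (or_introl h)))
  (fun h => no_negative (or_intror (or_intror h))).
have [x [[x_ge0 x_out x_cons] x_lt]] := unbounded (K - delta).
have := K_bound x (conj x_ge0 x_cons); rewrite /outflow x_out mulr1.
by move: x_lt; rewrite (objectiveE src); lra.
Qed.
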